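(* Let $k\ge3$, let $G$ be a graph, and let $L$ be a $k$-list assignment for $G$. Let $S=G[\{v_1,\dots,v_s\}]$ be an induced subgraph with $s\le k$. If for every $i\in\{1,\dots,s\}$ the number of neighbors of $v_i$ in $V(G)\setminus V(S)$ is less than $i$, then $S$ is safe in $G$ (with respect to $L$).
   Context: A $k$-list assignment $L$ for $G$ assigns to each vertex $v$ a set $L(v)$ of exactly $k$ colors; an $L$-coloring is a proper vertex coloring $f$ with $f(v)\in L(v)$. For an integer $n$ and $k\ge1$, $n\bmod^* k$ is the unique $m\in\{1,\dots,k\}$ with $n\equiv m\pmod k$. If $|V(G)|=n\ge 1$, an $L$-coloring $f$ of $G$ is strongly equitable (SE) if every color class has at most $\lceil n/k\rceil$ vertices and the number of colors whose class has exactly $\lceil n/k\rceil$ vertices (the full classes) is at most $n\bmod^* k$; the empty graph is regarded as SE $L$-colorable. A subgraph $S\subseteq G$ is safe in $G$ if every SE $L$-coloring of $G-V(S)$ (with the restriction of $L$) can be extended to an SE $L$-coloring of $G$. *)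

From mathcomp Require Import all_boot.
Set Implicit Arguments. Unset Strict Implicit. Unset Printing Implicit Defensive.

Definition simple_graph (T : finType) (e : rel T) : Prop :=
  symmetric e /\ irreflexive e.

Definition k_list_assignment (T C : finType) (k : nat) (L : T -> {set C}) : Prop :=
  forall v, #|L v| = k.

Definition modstar (n k : nat) : nat := if n %% k == 0 then k else n %% k.

Definition ceildiv (n k : nat) : nat := (n + k.-1) %/ k.

Definition L_coloring (T C : finType) (e : rel T) (L : T -> {set C})
    (U : {set T}) (f : T -> C) : Prop :=
  (forall v, v \in U -> f v \in L v) /\
  (forall u v, u \in U -> v \in U -> e u v -> f u != f v).

Definition color_class (T C : finType) (U : {set T}) (f : T -> C) (c : C) : {set T} :=
  [set v in U | f v == c].

Definition SE_coloring (T C : finType) (k : nat) (e : rel T) (L : T -> {set C})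
    (U : {set T}) (f : T -> C) : Prop :=
  L_coloring e L U f /\
  (U = set0 \/
   ((forall c, #|color_class U f c| <= ceildiv #|U| k) /\
    #|[set c : C | #|color_class U f c| == ceildiv #|U| k]| <= modstar #|U| k)).

Definition safe (T C : finType) (k : nat) (e : rel T) (L : T -> {set C})
    (S : {set T}) : Prop :=
  forall f : T -> C, SE_coloring k e L (~: S) f ->
    exists g : T -> C, SE_coloring k e L setT g /\ (forall v, v \notin S -> g v = f v).

From mathcomp Require Import all_boot zify.
Set Implicit Arguments. Unset Strict Implicit. Unset Printing Implicit Defensive.

(* Extend an SE colouring f of G - S by giving the v_i pairwise distinct colours c_i from
   L(v_i) that avoid the f-colours of their outside neighbours.  Choosing c_i from i = s
   down to 1, v_i has fewer than i forbidden neighbour colours and s - i colours already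
   used, so at least k - s + 1 candidates remain, and a colour whose class was already
   full is taken only when all candidates are full.  Hence at most
   (#full - (k - s)) full classes grow.  Writing |G - S| = a k + r with 0 < r <= k, the
   classes still have size at most a + 1 and at most r + s of them are full when
   r + s <= k; otherwise the maximum becomes a + 2, reached only by the grown full classes,
   of which there are at most r + s - k. *)

Lemma ceildiv_mulDr k a b : 0 < b <= k -> ceildiv (a * k + b) k = a.+1.
Proof.
move=> b_range; rewrite /ceildiv.
have -> : a * k + b + k.-1 = a.+1 * k + b.-1 by rewrite mulSnr; lia.
by rewrite divnMDl ?divn_small ?addn0 //; lia.
Qed.

Lemma modstar_mulDr k a b : 0 < b <= k -> modstar (a * k + b) k = b.
Proof.
move=> /andP[b_gt0 b_le_k]; rewrite /modstar modnMDl.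
have [b_lt_k | b_ge_k] := ltnP b k.
  by rewrite modn_small // ifN // -lt0n.
have -> : b = k by lia.
by rewrite modnn.
Qed.

Lemma predn_divn_eq n k : 0 < n -> n = n.-1 %/ k * k + (n.-1 %% k).+1.
Proof. by move=> n_gt0; rewrite addnS -divn_eq prednK. Qed.

Definition full_colors (C : finType) (n k : nat) (cnt : C -> nat) : {set C} :=
  [set c | cnt c == ceildiv n k].

(* The size condition of [SE_coloring] for the class-size function [cnt]; the non-empty
   disjunct of [SE_coloring U f] is [se_counts #|U| k (fun c => #|color_class U f c|)]. *)
Definition se_counts (C : finType) (n k : nat) (cnt : C -> nat) : Prop :=
  (forall c, cnt c <= ceildiv n k) /\ #|full_colors n k cnt| <= modstar n k.

Section ExtendCounts.

Variables (C : finType) (k : nat) (cnt' : C -> nat) (I : {set C}).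

Lemma se_counts_extend0 :
  0 < #|I| <= k -> (forall c, cnt' c = (c \in I)) -> se_counts #|I| k cnt'.
Proof.
move=> I_range cntE; have := ceildiv_mulDr 0 I_range; have := modstar_mulDr 0 I_range.
rewrite /se_counts /full_colors mul0n add0n => -> ->; split=> [c | ]; first by rewrite cntE leq_b1.
by apply: subset_leq_card; apply/subsetP => c; rewrite inE cntE eqb1.
Qed.

Lemma se_counts_extend (n : nat) (cnt : C -> nat) :
  0 < n -> 0 < k -> #|I| <= k -> se_counts n k cnt ->
  #|full_colors n k cnt :&: I| <= #|full_colors n k cnt| - (k - #|I|) ->
  (forall c, cnt' c = cnt c + (c \in I)) ->
  se_counts (n + #|I|) k cnt'.
Proof.
move=> n_gt0 k_gt0 I_le_k [cnt_le F_le] FI_le cntE.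
have r_range : 0 < (n.-1 %% k).+1 <= k by rewrite ltn_pmod.
move: (n.-1 %/ k) (n.-1 %% k).+1 r_range (predn_divn_eq k n_gt0) => a r r_range nE.
rewrite /full_colors nE ceildiv_mulDr // modstar_mulDr // in cnt_le F_le FI_le.
set F := [set c | cnt c == a.+1] in F_le FI_le.
rewrite /se_counts /full_colors nE -addnA.
(* Either the maximal size stays a.+1, and then no colour of [I] was full, or it becomes
   a.+2, and then only full colours of [I] reach it. *)
have [small | large] := leqP (r + #|I|) k.
  have r'_range : 0 < r + #|I| <= k by lia.
  rewrite ceildiv_mulDr // modstar_mulDr //.
  have FI0 : F :&: I = set0 by apply: cards0_eq; lia.
  have notF c : c \in I -> cnt c != a.+1.
    move=> cI; apply/eqP => cF.
    have : c \in F :&: I by rewrite !inE cF eqxx.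
    by rewrite FI0 inE.
  split=> [c | ].
    rewrite cntE; case: (boolP (c \in I)) => [cI | _]; last by rewrite addn0.
    by have := notF c cI; have := cnt_le c; lia.
  apply: leq_trans (subset_leq_card (_ : _ \subset F :|: I)) _.
    apply/subsetP => c; rewrite !inE cntE.
    by case: (boolP (c \in I)) => cI; rewrite ?orbT // addn0 orbF.
  by rewrite cardsU FI0 cards0 subn0 leq_add2r.
have nE' : a * k + (r + #|I|) = a.+1 * k + (r + #|I| - k) by rewrite mulSnr; lia.
have r'_range : 0 < r + #|I| - k <= k by lia.
rewrite nE' ceildiv_mulDr ?modstar_mulDr //; split=> [c | ].
  by rewrite cntE; have := cnt_le c; have := leq_b1 (c \in I); lia.
apply: leq_trans (subset_leq_card (_ : _ \subset F :&: I)) _; last by lia.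
apply/subsetP => c; rewrite !inE cntE.
by case: (c \in I); have := cnt_le c; rewrite ?andbF ?andbT; lia.
Qed.

End ExtendCounts.

Lemma exists_fresh_few_in (C : finType) (d : nat) (B I F : {set C}) :
  d < #|B :\: I| -> #|F :&: I| <= #|F| - d ->
  exists2 x, x \in B :\: I & #|F :&: (x |: I)| <= #|F| - d.
Proof.
(* Prefer a candidate outside [F]; if there is none, all candidates are full colours
   not yet in [I], and they pay for the one taken. *)
move=> B_big FI_le.
have [BI_F | /subsetPn[x x_BI x_F]] := boolP (B :\: I \subset F); last first.
  exists x => //; rewrite setIUr (_ : F :&: [set x] = set0) ?set0U //.
  by apply/setP => y; rewrite !inE; case: eqP => [-> | _]; rewrite ?andbF ?(negbTE x_F).
have [x x_BI] : exists x, x \in B :\: I by apply/card_gt0P; lia.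
exists x => //; rewrite setIUr; apply: leq_trans (leq_card_setU _ _) _.
have : #|F :&: I| + #|B :\: I| <= #|F|.
  rewrite -(cardsID I F) leq_add2l; apply/subset_leq_card/subsetP => y y_BI.
  by rewrite inE (subsetP BI_F) // andbT; move: y_BI; rewrite inE => /andP[].
by have := subset_leq_card (subsetIr F [set x]); rewrite cards1; lia.
Qed.

Section ConsOrd.

Variables (C : finType) (s : nat) (x : C) (c : 'I_s -> C).

Definition cons_ord (i : 'I_s.+1) : C := oapp c x (unlift ord0 i).

Lemma cons_ord0 : cons_ord ord0 = x.
Proof. by rewrite /cons_ord unlift_none. Qed.

Lemma cons_ord_lift j : cons_ord (lift ord0 j) = c j.
Proof. by rewrite /cons_ord liftK. Qed.

Lemma imset_cons_ord : [set cons_ord i | i : 'I_s.+1] = x |: [set c j | j : 'I_s].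
Proof.
apply/setP => y; apply/imsetP/setU1P => [[i _ ->] | [-> | /imsetP[j _ ->]]].
- case: (unliftP ord0 i) => [j -> | ->]; first by right; rewrite cons_ord_lift imset_f.
  by left; rewrite cons_ord0.
- by exists ord0; rewrite ?cons_ord0.
- by exists (lift ord0 j); rewrite ?cons_ord_lift.
Qed.

Lemma cons_ord_inj :
  injective c -> x \notin [set c j | j : 'I_s] -> injective cons_ord.
Proof.
move=> c_inj x_fresh; apply: in2T; apply/imset_injP.
by rewrite imset_cons_ord cardsU1 x_fresh card_imset // !card_ord.
Qed.

End ConsOrd.

(* The value at index 0, which has the largest set [A 0], is chosen last. *)
Lemma exists_injective_choice (C : finType) (d s : nat) (A : 'I_s -> {set C})
    (F : {set C}) :
  (forall i : 'I_s, d + (s - i) <= #|A i|) ->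
  exists c : 'I_s -> C, [/\ injective c, forall i, c i \in A i &
    #|F :&: [set c i | i : 'I_s]| <= #|F| - d].
Proof.
elim: s A => [|s IHs] A A_big.
  exists (@ffun0 _ (fun=> C) (card_ord 0)); split=> [[] // | [] // | ].
  apply: leq_trans (subset_leq_card (subsetIr _ _)) _.
  by apply: leq_trans (leq_imset_card _ _) _; rewrite card_ord.
have A'_big (j : 'I_s) : d + (s - j) <= #|A (lift ord0 j)|.
  by have := A_big (lift ord0 j); rewrite lift0 subSS.
have [c [c_inj c_A c_F]] := IHs _ A'_big.
have fresh_big : d < #|A ord0 :\: [set c j | j : 'I_s]|.
  have := A_big ord0; have := subset_leq_card (subsetIr (A ord0) [set c j | j : 'I_s]).
  by rewrite cardsD card_imset // card_ord subn0; lia.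
have [x /setDP[x_A x_fresh] x_F] := exists_fresh_few_in fresh_big c_F.
exists (cons_ord x c); split; first exact: cons_ord_inj.
  by move=> i; case: (unliftP ord0 i) => [j -> | ->]; rewrite ?cons_ord_lift ?cons_ord0.
by rewrite imset_cons_ord.
Qed.

Lemma card_fiber_inj (I C : finType) (c : I -> C) (a : C) :
  injective c -> #|[set i | c i == a]| = (a \in [set c i | i : I]).
Proof.
move=> c_inj; case: (boolP (a \in _)) => [/imsetP[j _ ->] | a_new].
  rewrite (_ : [set i | c i == c j] = [set j]) ?cards1 //.
  by apply/setP => i; rewrite !inE (inj_eq c_inj).
rewrite (_ : [set i | c i == a] = set0) ?cards0 //; apply/setP => i; rewrite !inE.
by apply: contraNF a_new => /eqP <-; rewrite imset_f.
Qed.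

Section ExtendColoring.

Variables (T C : finType) (s : nat) (v : 'I_s -> T) (c : 'I_s -> C) (f : T -> C).

Let S := [set v j | j : 'I_s].

Definition extend_on (x : T) : C :=
  if [pick j | v j == x] is Some j then c j else f x.

Hypothesis v_inj : injective v.

Lemma extend_on_image j : extend_on (v j) = c j.
Proof.
rewrite /extend_on; case: pickP => [j' /eqP/v_inj -> // | /(_ j)].
by rewrite eqxx.
Qed.

Lemma extend_on_out x : x \notin S -> extend_on x = f x.
Proof.
move=> x_out; rewrite /extend_on; case: pickP => [j /eqP v_j | //].
by case/negP: x_out; rewrite -v_j imset_f.
Qed.

Lemma extend_on_L_coloring (e : rel T) (L : T -> {set C}) :
  simple_graph e -> L_coloring e L (~: S) f ->
  (forall j, c j \in L (v j)) -> injective c ->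
  (forall j u, e (v j) u -> u \notin S -> f u != c j) ->
  L_coloring e L setT extend_on.
Proof.
move=> [e_sym e_irr] [f_L f_proper] c_L c_inj c_avoids; split=> [x _ | x y _ _].
  case: (boolP (x \in S)) => [/imsetP[j _ ->] | x_out]; first by rewrite extend_on_image.
  by rewrite extend_on_out // f_L // inE.
case: (boolP (x \in S)) => [/imsetP[j _ ->] | x_out];
  case: (boolP (y \in S)) => [/imsetP[j' _ ->] | y_out] => e_xy;
  rewrite ?extend_on_image ?extend_on_out //.
- by rewrite (inj_eq c_inj); apply: contraTneq e_xy => ->; rewrite e_irr.
- by rewrite eq_sym c_avoids.
- by rewrite c_avoids // e_sym.
- by rewrite f_proper // inE.
Qed.

Lemma card_color_class_extend_on a : injective c ->
  #|color_class setT extend_on a| =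
  #|color_class (~: S) f a| + (a \in [set c j | j : 'I_s]).
Proof.
move=> c_inj; rewrite -(cardsID S) addnC -(card_fiber_inj a c_inj); congr (_ + _).
  apply: eq_card => x; rewrite !inE.
  by case: (boolP (x \in S)) => x_out //; rewrite extend_on_out.
rewrite -(card_imset _ v_inj); apply: eq_card => x; rewrite !inE andTb.
apply/andP/imsetP => [[/eqP <- /imsetP[j _ ->]] | [j]].
  by exists j; rewrite // inE extend_on_image.
by rewrite inE => /eqP <- ->; rewrite extend_on_image imset_f.
Qed.

End ExtendColoring.

Lemma subset_color_class (T C : finType) (U : {set T}) (f : T -> C) (a : C) :
  color_class U f a \subset U.
Proof. by apply/subsetP => x; rewrite inE => /andP[]. Qed.

Lemma exists_distinct_list_colors (T C : finType) (e : rel T) (k s : nat)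
    (L : T -> {set C}) (v : 'I_s -> T) (f : T -> C) (F : {set C}) :
  k_list_assignment k L -> s <= k ->
  (forall i : 'I_s,
     #|[set u | e (v i) u & u \notin [set v j | j : 'I_s]]| < i.+1) ->
  exists c : 'I_s -> C, [/\ injective c, forall j, c j \in L (v j),
    forall j u, e (v j) u -> u \notin [set v j | j : 'I_s] -> f u != c j &
    #|F :&: [set c j | j : 'I_s]| <= #|F| - (k - s)].
Proof.
move=> L_k s_le_k out_deg.
pose N j := [set u | e (v j) u & u \notin [set v j | j : 'I_s]].
have A_big (j : 'I_s) : k - s + (s - j) <= #|L (v j) :\: f @: N j|.
  have := subset_leq_card (subsetIr (L (v j)) (f @: N j)).
  have := leq_imset_card f (N j); have := out_deg j; have := ltn_ord j.
  by rewrite cardsD L_k /N; lia.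
have [c [c_inj c_A c_F]] := exists_injective_choice F A_big.
exists c; split=> // [j | j u e_ju u_out]; first by have /setDP[] := c_A j.
have /setDP[_] := c_A j; apply: contraNneq => <-.
by rewrite imset_f // inE e_ju.
Qed.

Theorem lemma4p1 (T C : finType) (e : rel T) (k s : nat) (L : T -> {set C})
    (v : 'I_s -> T) :
  simple_graph e -> 3 <= k -> k_list_assignment k L ->
  injective v -> s <= k ->
  (forall i : 'I_s,
     #|[set u | e (v i) u & u \notin [set v j | j : 'I_s]]| < i.+1) ->
  safe k e L [set v j | j : 'I_s].
Proof.
move=> e_simple k_ge3 L_k v_inj s_le_k out_deg f [f_col f_SE].
set S := [set v j | j : 'I_s] in out_deg f_col f_SE *.
pose cnt a := #|color_class (~: S) f a|.
have [c [c_inj c_L c_avoids c_F]] :=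
  exists_distinct_list_colors f (full_colors #|~: S| k cnt) L_k s_le_k out_deg.
exists (extend_on v c f); split; last exact: extend_on_out.
split; first exact: extend_on_L_coloring.
have I_card : #|[set c j | j : 'I_s]| = s by rewrite card_imset ?card_ord.
have T_card : #|[set: T]| = #|~: S| + #|[set c j | j : 'I_s]|.
  by rewrite I_card cardsT -(cardsC S) addnC card_imset ?card_ord.
have [T0 | T_gt0] := posnP #|[set: T]|; [by left; apply: cards0_eq | right].
have classE a := card_color_class_extend_on f v_inj a c_inj.
rewrite T_card; have [n0 | n_gt0] := posnP #|~: S|.
  rewrite n0 add0n; apply: se_counts_extend0 => [ | a]; first by rewrite I_card; lia.
  have := subset_leq_card (subset_color_class (~: S) f a).
  by rewrite classE n0 leqn0 => /eqP ->.
case: f_SE => [S0 | f_counts]; first by move: n_gt0; rewrite S0 cards0.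
by apply: se_counts_extend f_counts _ classE; rewrite ?I_card //; lia.
Qed.
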